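(* Let $m\ge 1$, $q=2^m$, and let $n$ be odd. Let \[L(x)=\sum_{i=0}^{m-1}L_i\big(x^{2^i}\big),\] where each $L_i$ is a $q$-linear polynomial over $\mathbb F_{q^n}$. Then $\mathrm{Tr}(x^{q+1})+L(x)$ is a permutation polynomial of $\mathbb F_{q^n}$ if and only if all three of the following hold: $L_i(1)\in\mathbb F_q$ for $0\le i<m$; the polynomial \[\ell(x)=\sum_{i=0}^{m-1}(L_i(1)x)^{2^{m-i}}+x^{2^{m-1}}\] is a permutation polynomial of $\mathbb F_q$; and $\ker\mathrm{Tr}\cap\ker L^\prime=\{0\}$.
   Context: $\mathrm{Tr}$ denotes the trace map of $\mathbb F_{q^n}$ over $\mathbb F_q$, $\mathrm{Tr}(x)=\sum_{j=0}^{n-1}x^{q^j}$. Polynomials are regarded as maps on $\mathbb F_{q^n}$. A $q$-linear polynomial over $\mathbb F_{q^n}$ is one of the form $\sum_{j=0}^{n-1}a_jx^{q^j}$ with $a_j\in\mathbb F_{q^n}$; a $2$-linear polynomial is one of the form $\sum_{j=0}^{mn-1}a_jx^{2^j}$. For a $2$-linear polynomial $L(x)=\sum_{j=0}^{mn-1}a_jx^{2^j}$, its adjoint is $L^\prime(x)=\sum_{j=0}^{mn-1}(a_jx)^{2^{-j}}$, where $y\mapsto y^{2^{-j}}$ denotes the inverse of the automorphism $y\mapsto y^{2^j}$ of $\mathbb F_{q^n}$; equivalently $L'$ is the unique map with $\mathrm{T}(\alpha L(\beta))=\mathrm{T}(L^\prime(\alpha)\beta)$ for all $\alpha,\beta\in\mathbb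 F_{q^n}$, where $\mathrm T$ is the absolute trace of $\mathbb F_{q^n}$ over $\mathbb F_2$. $\ker$ denotes the kernel of an additive map on $\mathbb F_{q^n}$. *)

From HB Require Import structures.
From mathcomp Require Import all_boot all_order all_algebra all_field.
Set Implicit Arguments. Unset Strict Implicit. Unset Printing Implicit Defensive.
Import GRing.Theory.
Local Open Scope ring_scope.

Section Defs.
Variable F : finFieldType.

Definition trq (q n : nat) (x : F) : F := \sum_(j < n) x ^+ (q ^ j).

Definition qlin (q n : nat) (a : 'I_n -> F) (x : F) : F :=
  \sum_(j < n) a j * x ^+ (q ^ j).

Definition Lmap (m n : nat) (a : 'I_m -> 'I_n -> F) (x : F) : F :=
  \sum_(i < m) qlin (2 ^ m) (a i) (x ^+ (2 ^ i)).

(* Inverse of the automorphism y |-> y^(2^k) of F = F_{2^(m n)}, for k <= m n: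
   y |-> y^(2^(m n - k)). *)
Definition frobinv (m n k : nat) (y : F) : F := y ^+ (2 ^ (m * n - k)).

(* Adjoint of L, written as the 2-linear polynomial
   L(x) = sum_{i<m, j<n} a_{i j} x^(2^(i + m j)), so
   L'(x) = sum_{i,j} (a_{i j} x)^(2^-(i + m j)). *)
Definition Ladj (m n : nat) (a : 'I_m -> 'I_n -> F) (x : F) : F :=
  \sum_(i < m) \sum_(j < n) frobinv m n (i + m * j) (a i j * x).

Definition inFq (m : nat) (x : F) : bool := x ^+ (2 ^ m) == x.

Definition ell (m n : nat) (a : 'I_m -> 'I_n -> F) (x : F) : F :=
  \sum_(i < m) (qlin (2 ^ m) (a i) 1 * x) ^+ (2 ^ (m - i)) + x ^+ (2 ^ (m - 1)).

Definition perm_on_set (S : pred F) (f : F -> F) : Prop :=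
  {in S, forall x, f x \in S} /\ {in S &, injective f}.

End Defs.

(* Put f x = Tr (x ^ (q + 1)) + L x.  Expanding,
     f (x + y) = f x + f y + Tr (x * delta y),   delta y = y ^ (q ^ (n - 1)) + y ^ q,
   and, n being odd, delta y = 0 exactly when y lies in F_q.  So the values
   Tr (x * delta y) fill F_q when y is not in F_q and vanish otherwise, and f is
   injective iff (A) L y in F_q forces y in F_q, and (B) y ^ 2 + L y has no
   nonzero root in F_q.
   When every L_i(1) lies in F_q (equivalently, L maps F_q into F_q), y ^ 2 + L y
   restricted to F_q is the additive map whose adjoint for the absolute trace of
   F_q is ell, so (B) says that ell permutes F_q.
   For (A), the preimage of F_q under L is the kernel of phi = L ^ q + L, whose
   adjoint for the absolute trace of F_(q^n) is L' o theta with
   theta x = x ^ (q ^ (n - 1)) + x.  Adjoint additive maps have kernels of the same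
   size, and theta maps onto ker Tr with kernel F_q, so the preimage has
   q * #|ker Tr :&: ker L'| elements.  As #|F_q| = q, (A) holds iff L maps F_q
   into F_q and ker Tr :&: ker L' = 0. *)

From HB Require Import structures.
From mathcomp Require Import all_boot all_order all_algebra all_field.
From mathcomp Require Import zify ring.
Set Implicit Arguments. Unset Strict Implicit. Unset Printing Implicit Defensive.
Import GRing.Theory.
Local Open Scope ring_scope.

Lemma card_le_sparse_roots (F : finFieldType) K (c : 'I_K -> F) (e : 'I_K -> nat)
    d (S : {pred F}) k0 :
  injective e -> (forall k, e k <= d)%N -> c k0 != 0 ->
  {in S, forall x, \sum_(k < K) c k * x ^+ e k = 0} -> (#|S| <= d)%N.
Proof.
move=> e_inj e_le ck0 S_roots.
pose p : {poly F} := \sum_(k < K) c k *: 'X^(e k).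
have p_ek0 : p`_(e k0) = c k0.
  rewrite coef_sum (bigD1 k0) //= coefZ coefXn eqxx mulr1 big1 ?addr0 // => k.
  by rewrite coefZ coefXn (inj_eq e_inj) eq_sym => /negbTE->; rewrite mulr0.
have p_neq0 : p != 0 by apply: contraNneq ck0 => p0; rewrite -p_ek0 p0 coef0.
have size_p : (size p <= d.+1)%N.
  apply: (leq_trans (size_sum _ _ _)); apply/bigmax_leqP => k _.
  by apply: (leq_trans (size_scale_leq _ _)); rewrite size_polyXn ltnS.
have rootsS : all (root p) (enum S).
  apply/allP => x; rewrite mem_enum => Sx.
  rewrite /root horner_sum (eq_bigr (fun k => c k * x ^+ e k)) ?S_roots //.
  by move=> k _; rewrite hornerZ hornerXn.
rewrite cardE -ltnS; apply: leq_trans size_p.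
exact: max_poly_roots p_neq0 rootsS (enum_uniq _).
Qed.

Section AdditiveCounting.
Variables (V W : finZmodType) (g : V -> W).
Hypothesis gD : {morph g : x y / x + y}.

Let gB x y : g (x - y) = g x - g y.
Proof. by apply: (addIr (g y)); rewrite -gD !subrK. Qed.

Lemma card_additive_fiber x0 : #|[set x | g x == g x0]| = #|[set x | g x == 0]|.
Proof.
have -> : [set x | g x == g x0] = [set z + x0 | z in [set x | g x == 0]].
  apply/setP => x; rewrite inE; apply/eqP/imsetP => [gx | [z]].
    by exists (x - x0); rewrite ?subrK // inE gB gx subrr.
  by rewrite inE => /eqP gz ->; rewrite gD gz add0r.
by rewrite card_imset //; apply: addIr.
Qed.

Lemma card_preimset_additive (A : {set W}) : A \subset [set g x | x in V] ->
  #|g @^-1: A| = (#|A| * #|[set x | g x == 0%R]|)%N.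
Proof.
move=> A_img; rewrite -sum1_card (partition_big g (mem A)) /=; last first.
  by move=> x; rewrite inE.
rewrite -sum_nat_const; apply: eq_bigr => y Ay.
have /imsetP[x0 _ y_def] := subsetP A_img y Ay.
rewrite -(card_additive_fiber x0) -sum1_card; apply: eq_bigl => x.
by rewrite !inE -y_def andb_idl // => /eqP->.
Qed.

Lemma card_image_mul_ker : (#|[set g x | x in V]| * #|[set x | g x == 0%R]|)%N = #|V|.
Proof.
rewrite -card_preimset_additive //; apply: eq_card => x.
by rewrite !inE imset_f.
Qed.

Lemma additive_inj_in (U : zmodClosed V) :
  {in U, forall x, g x = 0 -> x = 0} -> {in U &, injective g}.
Proof.
move=> g_ker x y Ux Uy gxy; apply/eqP; rewrite -subr_eq0; apply/eqP/g_ker.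
  exact: rpredB.
by rewrite gB gxy subrr.
Qed.

End AdditiveCounting.

Lemma adjoint_inj_in (R : finNzRingType) (U : {pred R}) (tau phi psi : R -> R) :
  tau 0 = 0 -> {in U, forall x, phi x \in U} -> {in U &, injective phi} ->
  {in U, forall c, c != 0 -> exists2 y, y \in U & tau (c * y) != 0} ->
  {in U &, forall c x, tau (c * phi x) = tau (psi c * x)} ->
  {in U, forall c, psi c = 0 -> c = 0}.
Proof.
move=> tau0 phiU phi_inj nondeg adj c Uc psic0; apply/eqP/contraT => c_neq0.
have [y Uy] := nondeg c Uc c_neq0.
have img_U : [set phi x | x in U] =i U.
  apply/subset_cardP; first by rewrite card_in_imset.
  by apply/subsetP => _ /imsetP[x Ux ->]; apply: phiU.
have /imsetP[x Ux ->] : y \in [set phi x | x in U] by rewrite img_U.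
by rewrite adj // psic0 mul0r tau0 eqxx.
Qed.

Section TraceMaps.
Variable F : finFieldType.

Lemma expr_expn_fix b j (x : F) : x ^+ b = x -> x ^+ (b ^ j) = x.
Proof.
by move=> xb; elim: j => [|j IHj]; rewrite ?expr1 // expnS exprM xb.
Qed.

Lemma trq_frob b K (x : F) : x ^+ (b ^ K) = x -> trq b K (x ^+ b) = trq b K x.
Proof.
rewrite /trq; case: K => [|K] xK; first by rewrite !big_ord0.
rewrite big_ord_recr big_ord_recl /= -exprM -expnS xK expn0 expr1 addrC.
by congr (_ + _); apply: eq_bigr => j _; rewrite -exprM -expnS.
Qed.

Lemma trq_frobX b K j (x : F) : x ^+ (b ^ K) = x ->
  trq b K (x ^+ (b ^ j)) = trq b K x.
Proof.
move=> xK; elim: j => [|j IHj]; first by rewrite expr1.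
by rewrite expnSr exprM trq_frob ?IHj // -exprM mulnC exprM xK.
Qed.

Lemma trq0 b K : (0 < b)%N -> trq b K 0 = 0 :> F.
Proof.
by move=> b_gt0; rewrite /trq big1 // => j _; rewrite expr0n expn_eq0 -leqn0 leqNgt b_gt0.
Qed.

Lemma trq_const b K (c : F) : c ^+ b = c -> trq b K c = c *+ K.
Proof.
move=> cb; rewrite /trq (eq_bigr (fun=> c)) ?sumr_const ?card_ord // => j _.
exact: expr_expn_fix.
Qed.

Lemma card_trq_ker_le b K : (1 < b)%N -> (0 < K)%N ->
  (#|[set x : F | trq b K x == 0%R]| <= b ^ K.-1)%N.
Proof.
move=> b_gt1 K_gt0.
apply: (@card_le_sparse_roots _ K (fun=> 1) (fun j => b ^ j)%N _ _ (Ordinal K_gt0)).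
- by move=> i j /(expnI b_gt1)/val_inj.
- by move=> j; rewrite leq_pexp2l ?(ltnW b_gt1) // -ltnS prednK.
- exact: oner_neq0.
- move=> x; rewrite inE => /eqP tx0; rewrite -[RHS]tx0.
  by apply: eq_bigr => j _; rewrite mul1r.
Qed.

Lemma trq_neq0_in b K (S : {pred F}) : (1 < b)%N -> (0 < K)%N ->
  (b ^ K.-1 < #|S|)%N -> exists2 z, z \in S & trq b K z != 0.
Proof.
move=> b_gt1 K_gt0 S_big.
have : ~~ (S \subset [set x | trq b K x == 0]).
  apply: contraTN S_big => /subset_leq_card S_le.
  by rewrite -leqNgt (leq_trans S_le) ?card_trq_ker_le.
by case/subsetPn => z Sz; rewrite inE => tz; exists z.
Qed.

End TraceMaps.

Section FrobeniusTrace.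
Variables (F : finFieldType) (b : nat).
Hypothesis b_pchar : [pchar F].-nat b.

Lemma expr_sum_pchar I (r : seq I) (P : pred I) (G : I -> F) :
  (\sum_(i <- r | P i) G i) ^+ b = \sum_(i <- r | P i) G i ^+ b.
Proof.
apply: (big_morph (fun x : F => x ^+ b)) => [x y|]; first exact: exprDn_pchar.
by rewrite expr0n; case/andP: b_pchar => /lt0n_neq0/negbTE->.
Qed.

Lemma trqD K : {morph @trq F b K : x y / x + y}.
Proof.
move=> x y; rewrite /trq -big_split; apply: eq_bigr => j _.
by rewrite exprDn_pchar // pnatX b_pchar.
Qed.

Lemma trq_sum K I (r : seq I) (P : pred I) (G : I -> F) :
  trq b K (\sum_(i <- r | P i) G i) = \sum_(i <- r | P i) trq b K (G i).
Proof.
apply: (big_morph (@trq F b K) (trqD K)); apply: trq0.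
by case/andP: b_pchar.
Qed.

Lemma trq_fix K (x : F) : x ^+ (b ^ K) = x -> trq b K x ^+ b = trq b K x.
Proof.
move=> xK; rewrite -[RHS](trq_frob xK) /trq expr_sum_pchar.
by apply: eq_bigr => j _; rewrite exprAC.
Qed.

End FrobeniusTrace.

Section AbsoluteTrace.
Variables (F : finFieldType) (N : nat).
Hypotheses (N_gt0 : (0 < N)%N) (hF : #|F| = (2 ^ N)%N).

Let F2 : 2 \in [pchar F] := card_finPcharP hF (isT : prime 2).
Let pchar_nat2 : [pchar F].-nat 2%N. Proof. by rewrite pnatE. Qed.
Local Notation T := (@trq F 2%N N).

Lemma expr_card2 (x : F) : x ^+ (2 ^ N) = x.
Proof. by rewrite -hF expf_card. Qed.

Lemma traceD : {morph T : x y / x + y}.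
Proof. exact: trqD. Qed.

Lemma trace0 : T 0 = 0.
Proof. exact: trq0. Qed.

Lemma trace_eq01 x : T x = 0 \/ T x = 1.
Proof.
have Tx2 : T x ^+ 2 = T x := trq_fix pchar_nat2 (expr_card2 x).
have /eqP : T x * (T x - 1) = 0 by rewrite mulrBr mulr1 -expr2 Tx2 subrr.
by rewrite mulf_eq0 subr_eq0 => /orP[] /eqP; [left | right].
Qed.

Lemma trace_nondeg x : x != 0 -> exists y, T (x * y) != 0.
Proof.
move=> x_neq0; have [z _ Tz] : exists2 z, z \in predT & T z != 0.
  by apply: trq_neq0_in => //; rewrite cardT -cardE hF ltn_exp2l // prednK.
by exists (x^-1 * z); rewrite mulVKf.
Qed.

Let sgn (t : F) : int := if t == 0 then 1 else -1.

Lemma sum_sign_trace (S : {set F}) c : {in S &, forall u v, u + v \in S} ->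
  \sum_(w in S) sgn (T (c * w)) =
    if [forall w in S, T (c * w) == 0] then #|S|%:Z else 0.
Proof.
move=> S_add; case: ifPn => [/forall_inP S_perp | ].
  under eq_bigr => w /S_perp /eqP Tw0 do rewrite /sgn Tw0 eqxx.
  by rewrite sumr_const natz.
rewrite negb_forall_in => /exists_inP[w0 Sw0 Tw0].
have Tw0_1 : T (c * w0) = 1 by case: (trace_eq01 (c * w0)) Tw0 => ->; rewrite ?eqxx.
(* Translating by w0 flips every sign, as T (c * w0) = 1. *)
set X := \sum_(w in S) _; suff : X = - X by lia.
rewrite {1}/X (reindex_inj (addIr w0)) /= -sumrN; apply: eq_big => w.
  apply/idP/idP => [Sww0 | Sw]; last exact: S_add.
  by have := S_add _ _ Sww0 Sw0; rewrite addrK_pchar2.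
move=> _; rewrite mulrDr traceD Tw0_1 /sgn.
by case: (trace_eq01 (c * w)) => ->; rewrite ?add0r ?addrr_pchar2 ?oner_eq0 ?eqxx ?opprK.
Qed.

Lemma card_orthogonal (W : {set F}) : 0 \in W -> {in W &, forall u v, u + v \in W} ->
  (#|W| * #|[set c | [forall w in W, T (c * w)%R == 0%R]]|)%N = #|F|.
Proof.
(* Sum sgn (T (c * w)) over c in F and w in W, in both orders. *)
move=> W0 W_add; set P := [set c | _]; apply/eqP; rewrite -eqz_nat; apply/eqP.
transitivity (\sum_(c : F) \sum_(w in W) sgn (T (c * w))).
  rewrite (bigID (mem P)) /= [X in _ + X]big1 ?addr0; last first.
    by move=> c; rewrite sum_sign_trace // inE => /negbTE->.
  rewrite (eq_bigr (fun=> #|W|%:Z)); last by move=> c; rewrite sum_sign_trace // inE => ->.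
  by rewrite sumr_const -mulr_natr natz PoszM.
rewrite exchange_big (bigD1 0) //= [X in _ + X]big1 ?addr0; last first.
  move=> w /andP[_ w_neq0]; have [y Tw] := trace_nondeg w_neq0.
  transitivity (\sum_(c in [set: F]) sgn (T (w * c))).
    by apply: eq_big => [c | c _]; [rewrite in_setT | rewrite mulrC].
  rewrite sum_sign_trace; last by move=> u v _ _; apply: in_setT.
  by rewrite ifN //; apply: contra Tw => /forall_inP; apply; apply: in_setT.
rewrite (eq_bigr (fun=> 1)); last by move=> c _; rewrite mulr0 trace0 /sgn eqxx.
by rewrite sumr_const natz.
Qed.

Lemma card_ker_adjoint (phi psi : F -> F) : {morph phi : x y / x + y} ->
  (forall c x, T (c * phi x) = T (psi c * x)) ->
  #|[set x | phi x == 0]| = #|[set x | psi x == 0]|.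
Proof.
move=> phiD adj; set W := [set phi x | x in F].
have phi0 : phi 0 = 0 by apply: (addrI (phi 0)); rewrite -phiD !addr0.
have W0 : 0 \in W by rewrite -phi0 imset_f.
have W_add : {in W &, forall u v, u + v \in W}.
  by move=> _ _ /imsetP[x _ ->] /imsetP[y _ ->]; rewrite -phiD imset_f.
have perpW : [set c | [forall w in W, T (c * w) == 0]] = [set c | psi c == 0].
  apply/setP => c; rewrite !inE; apply/forall_inP/eqP => [W_perp | psic0].
    apply/eqP/contraT => /trace_nondeg[y]; rewrite -adj.
    have Wy : phi y \in W by apply: imset_f.
    by rewrite (eqP (W_perp _ Wy)) eqxx.
  by move=> _ /imsetP[x _ ->]; rewrite adj psic0 mul0r trace0.
have := card_orthogonal W0 W_add; rewrite perpW -(card_image_mul_ker phiD).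
by move/eqP; rewrite eqn_pmul2l ?card_gt0; [move/eqP | apply/set0Pn; exists 0].
Qed.

End AbsoluteTrace.

Section Theorem1.
Variables (F : finFieldType) (m n : nat).
Hypotheses (m_gt0 : (0 < m)%N) (n_odd : odd n) (hF : #|F| = (2 ^ (m * n))%N).
Variable a : 'I_m -> 'I_n -> F.

Local Notation q := (2 ^ m)%N.
Local Notation Tr := (@trq F q n).
Local Notation T := (@trq F 2%N (m * n)).
Local Notation tt := (@trq F 2%N m).
Local Notation L := (Lmap a).

Let F2 : 2 \in [pchar F] := card_finPcharP hF (isT : prime 2).
Let pchar_nat2 : [pchar F].-nat 2%N. Proof. by rewrite pnatE. Qed.
Let pchar_nat2X k : [pchar F].-nat (2 ^ k)%N. Proof. by rewrite pnatX pchar_nat2. Qed.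
Let n_gt0 : (0 < n)%N. Proof. by case: n n_odd. Qed.
Let q_gt1 : (1 < q)%N. Proof. by rewrite -{1}(expn0 2) ltn_exp2l. Qed.

Let qn_pred : (q ^ n = q * q ^ n.-1)%N. Proof. by rewrite -expnS prednK. Qed.

Lemma expr_qn (x : F) : x ^+ (q ^ n) = x.
Proof. by rewrite -expnM (expr_card2 hF). Qed.

Definition Fq : {pred F} := inFq m.

Lemma FqE x : (x \in Fq) = (x ^+ q == x). Proof. by []. Qed.

Fact Fq_divring_closed : divring_closed Fq.
Proof.
split=> [|x y|x y]; rewrite !FqE ?expr1n // => /eqP xq /eqP yq.
  by rewrite oppr_pchar2 // exprDn_pchar // xq yq.
by rewrite exprMn exprVn xq yq.
Qed.

HB.instance Definition _ := GRing.isDivringClosed.Build F Fq Fq_divring_closed.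

Lemma Fq_exprX j x : x \in Fq -> x ^+ (q ^ j) = x.
Proof. by move/eqP; apply: expr_expn_fix. Qed.

Lemma card_Fq_le : (#|Fq| <= q)%N.
Proof.
pose p : {poly F} := 'X^q - 'X.
have size_p : size p = q.+1.
  by rewrite size_polyDl ?size_polyXn // size_polyN size_polyX ltnS.
have p_neq0 : p != 0 by rewrite -size_poly_eq0 size_p.
have rootsFq : all (root p) (enum Fq).
  by apply/allP => x; rewrite mem_enum FqE => /eqP xq; rewrite /root !hornerE xq subrr.
by rewrite cardE -ltnS -size_p; apply: max_poly_roots rootsFq (enum_uniq _).
Qed.

Lemma Tr_Fq x : Tr x \in Fq.
Proof. exact/eqP/(trq_fix (pchar_nat2X m) (expr_qn x)). Qed.

Lemma Tr0 : Tr 0 = 0.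
Proof. by rewrite trq0 ?expn_gt0. Qed.

Lemma Tr_id c : c \in Fq -> Tr c = c.
Proof.
move=> /eqP cq; rewrite trq_const // -[n]odd_double_half n_odd -muln2.
by rewrite mulrnDr mulrnA mulr2n addrr_pchar2 // addr0.
Qed.

Lemma Tr_counts : [/\ #|Fq| = q, #|[set x | Tr x == 0]| = (q ^ n.-1)%N
  & forall c, c \in Fq -> exists x, Tr x = c].
Proof.
have img_Fq : [set Tr x | x in F] \subset Fq.
  by apply/subsetP => _ /imsetP[x _ ->]; apply: Tr_Fq.
have cardIK := card_image_mul_ker (trqD (pchar_nat2X m) n).
rewrite hF expnM qn_pred in cardIK.
have img_le := subset_leq_card img_Fq.
have ker_le := card_trq_ker_le F q_gt1 n_gt0.
have Fq_le := card_Fq_le.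
have K_pos : (0 < q ^ n.-1)%N by rewrite !expn_gt0.
have I_le := leq_trans img_le Fq_le.
have I_eq : #|[set Tr x | x in F]| = q.
  by apply/eqP; rewrite eqn_leq I_le -(leq_pmul2r K_pos) -cardIK leq_mul2l ker_le orbT.
have ker_eq : #|[set x | Tr x == 0]| = (q ^ n.-1)%N.
  by apply/eqP; rewrite -(eqn_pmul2l (ltnW q_gt1)) -cardIK I_eq.
have Fq_eq : #|Fq| = q by apply/eqP; rewrite eqn_leq Fq_le -I_eq img_le.
have img_eq := elimT (subset_cardP (etrans I_eq (esym Fq_eq))) img_Fq.
by split=> // c; rewrite -img_eq => /imsetP[x _ ->]; exists x.
Qed.

Lemma card_Fq : #|Fq| = q.
Proof. by case: Tr_counts. Qed.

Lemma card_Tr_ker : #|[set x | Tr x == 0]| = (q ^ n.-1)%N.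
Proof. by case: Tr_counts. Qed.

Lemma Tr_onto c : c \in Fq -> exists x, Tr x = c.
Proof. by case: Tr_counts => _ _; apply. Qed.

Lemma LD : {morph L : x y / x + y}.
Proof.
move=> x y; rewrite /Lmap -big_split; apply: eq_bigr => i _.
rewrite /qlin -big_split; apply: eq_bigr => j _.
by rewrite !exprDn_pchar ?pnatX ?pchar_nat2 // mulrDr.
Qed.

Definition f x := Tr (x ^+ (q + 1)) + L x.

Definition delta (y : F) := y ^+ (q ^ n.-1) + y ^+ q.

Lemma delta_eq0 y : (delta y == 0) = (y \in Fq).
Proof.
rewrite /delta FqE addr_eq0 oppr_pchar2 //; apply/eqP/eqP => [yqn | yq]; last first.
  by rewrite yq Fq_exprX // FqE yq.
have yq2 : y ^+ (q ^ 2) = y by rewrite -{2}[y]expr_qn qn_pred mulnC exprM yqn -exprM mulnn.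
have qn_odd : (q ^ n = (q ^ 2) ^ n./2 * q)%N.
  by rewrite -[in RHS]expnM -expnSr -[in LHS](odd_double_half n) n_odd add1n mulnC muln2.
by rewrite -{2}[y]expr_qn qn_odd exprM (expr_expn_fix _ yq2).
Qed.

Lemma Tr_frob_mul x y : Tr (x ^+ q * y) = Tr (x * y ^+ (q ^ n.-1)).
Proof.
by rewrite -[RHS](trq_frob (expr_qn _)) exprMn -exprM -expnSr prednK // expr_qn.
Qed.

Lemma f_addE x y : f (x + y) = f x + Tr (x * delta y) + f y.
Proof.
rewrite /f /delta LD addn1 !exprSr exprDn_pchar ?pnatX ?pchar_nat2 // mulrDr !mulrDl.
rewrite !(trqD (pchar_nat2X m)) (Tr_frob_mul x y) (mulrC (y ^+ q)) mulrDr (trqD (pchar_nat2X m)).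
ring.
Qed.

Lemma f_shift_eq x y : (f (x + y) == f x) = (Tr (x * delta y) == f y).
Proof.
by rewrite f_addE -addrA -{2}[f x]addr0 (inj_eq (addrI _)) addr_eq0 oppr_pchar2.
Qed.

Lemma f_in_Fq y : (f y \in Fq) = (L y \in Fq).
Proof. exact/rpredDl/Tr_Fq. Qed.

Lemma f_Fq y : y \in Fq -> f y = y ^+ 2 + L y.
Proof. by move=> yFq; rewrite /f addn1 exprSr (eqP yFq) -expr2 Tr_id ?rpredX. Qed.

Lemma f_inj_iff : injective f <->
  (forall y, L y \in Fq -> y \in Fq) /\ {in Fq, forall y, y ^+ 2 + L y = 0 -> y = 0}.
Proof.
have -> : injective f <-> (forall x y, Tr (x * delta y) = f y -> y = 0).
  split=> [f_inj x y /eqP | f_shift x y fxy].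
    by rewrite -f_shift_eq -{2}[x]addr0 => /eqP/f_inj/addrI.
  suff /eqP : y - x = 0 by rewrite subr_eq0 => /eqP.
  by apply: (f_shift x); apply/eqP; rewrite -f_shift_eq addrC subrK fxy.
split=> [f_shift | [LFq kerFq] x y].
  split=> [y LyFq | y yFq fy0]; last by apply: (f_shift 0); rewrite mul0r Tr0 f_Fq.
  apply: contraT => yNFq; have dy : delta y != 0 by rewrite delta_eq0.
  have [x Trx] : exists x, Tr x = f y by apply: Tr_onto; rewrite f_in_Fq.
  by rewrite (f_shift (x / delta y) y) ?rpred0 ?divfK in yNFq.
have [yFq | yNFq] := boolP (y \in Fq).
  have /eqP dy : delta y == 0 by rewrite delta_eq0.
  by rewrite dy mulr0 Tr0 f_Fq // => /esym; apply: kerFq.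
move=> Trfy; have := Tr_Fq (x * delta y).
by rewrite Trfy f_in_Fq => /LFq; rewrite (negbTE yNFq).
Qed.

Definition coefL i := qlin q (a i) 1.

Lemma L_Fq x : x \in Fq -> L x = \sum_(i < m) coefL i * x ^+ (2 ^ i).
Proof.
move=> xFq; apply: eq_bigr => i _; rewrite /coefL /qlin mulr_suml.
by apply: eq_bigr => j _; rewrite expr1n mulr1 Fq_exprX ?rpredX.
Qed.

Lemma coefL_Fq_iff : (forall i, coefL i \in Fq) <-> {in Fq, forall x, L x \in Fq}.
Proof.
split=> [coefL_Fq x xFq | LFq i].
  by rewrite L_Fq // rpred_sum // => i _; rewrite rpredM ?rpredX.
apply: contraT => ciNFq.
suff : (#|Fq| <= 2 ^ (m - 1))%N.
  by rewrite card_Fq leq_exp2l // subn1 leqNgt ltn_predL m_gt0.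
apply: (@card_le_sparse_roots _ m (fun i => coefL i ^+ q - coefL i) (fun i => 2 ^ i)%N _ _ i).
- by move=> i1 i2 /(expnI (ltnSn 1))/val_inj.
- by move=> j; rewrite leq_pexp2l // -ltnS subn1 prednK.
- by rewrite subr_eq0.
- move=> x xFq; rewrite (eq_bigr _ (fun j _ => mulrBl _ _ _)) sumrB -L_Fq //.
  have -> : \sum_(j < m) coefL j ^+ q * x ^+ (2 ^ j) = L x ^+ q.
    rewrite L_Fq // expr_sum_pchar ?pchar_nat2X //; apply: eq_bigr => j _.
    by rewrite exprMn (eqP (rpredX (2 ^ j) xFq)).
  by rewrite (eqP (LFq x xFq)) subrr.
Qed.

Lemma tt_frob j y : y \in Fq -> tt (y ^+ (2 ^ j)) = tt y.
Proof. by move/eqP; apply: trq_frobX. Qed.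

Lemma tt_shift k y z : (k <= m)%N -> y \in Fq -> z \in Fq ->
  tt (y * z ^+ (2 ^ k)) = tt (y ^+ (2 ^ (m - k)) * z).
Proof.
move=> le_km yFq zFq; rewrite -(tt_frob (m - k) (rpredM yFq (rpredX _ zFq))).
by rewrite exprMn -exprM -expnD subnKC // (eqP zFq).
Qed.

Lemma tt_nondeg c : c \in Fq -> c != 0 -> exists2 y, y \in Fq & tt (c * y) != 0.
Proof.
move=> cFq c_neq0; have [z zFq tz] : exists2 z, z \in Fq & tt z != 0.
  by apply: trq_neq0_in => //; rewrite card_Fq ltn_exp2l // prednK.
by exists (c^-1 * z); rewrite ?rpredM ?rpredV // mulVKf.
Qed.

Definition ell_adj x := x ^+ 2 + \sum_(i < m) coefL i * x ^+ (2 ^ i).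

Lemma ell_adjD : {morph ell_adj : x y / x + y}.
Proof.
move=> x y; rewrite /ell_adj exprDn_pchar // [RHS]addrACA -big_split; congr (_ + _).
by apply: eq_bigr => i _; rewrite exprDn_pchar ?pchar_nat2X // mulrDr.
Qed.

Lemma ellD : {morph ell a : x y / x + y}.
Proof.
move=> x y; rewrite /ell exprDn_pchar ?pchar_nat2X // [RHS]addrACA -big_split.
by congr (_ + _); apply: eq_bigr => i _; rewrite mulrDr exprDn_pchar ?pchar_nat2X.
Qed.

Section EllAdjoint.
Hypothesis coefL_Fq : forall i, coefL i \in Fq.

Lemma ell_adj_Fq x : x \in Fq -> ell_adj x \in Fq.
Proof.
by move=> xFq; rewrite rpredD ?rpredX ?rpred_sum // => i _; rewrite rpredM ?rpredX.
Qed.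

Lemma ell_Fq c : c \in Fq -> ell a c \in Fq.
Proof.
by move=> cFq; rewrite rpredD ?rpredX ?rpred_sum // => i _; rewrite rpredX ?rpredM ?coefL_Fq.
Qed.

Lemma tt_ell_adj : {in Fq &, forall c x, tt (c * ell_adj x) = tt (ell a c * x)}.
Proof.
move=> c x cFq xFq; have ttD := trqD pchar_nat2 m.
rewrite /ell_adj /ell mulrDr mulrDl !ttD mulr_sumr mulr_suml !(trq_sum pchar_nat2) addrC.
congr (_ + _); last by rewrite -[x ^+ 2]/(x ^+ (2 ^ 1)) tt_shift // subn1.
apply: eq_bigr => i _; rewrite mulrA tt_shift ?rpredM // ?(ltnW (ltn_ord i)) //.
by rewrite (mulrC c).
Qed.

Lemma ell_perm_iff :
  perm_on_set (inFq m) (ell a) <-> {in Fq, forall x, x ^+ 2 + L x = 0 -> x = 0}.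
Proof.
have tt0 : tt 0 = 0 by rewrite trq0.
have ell_adjE : {in Fq, forall x, ell_adj x = x ^+ 2 + L x} by move=> x xFq; rewrite L_Fq.
have tt_ell_adj_sym : {in Fq &, forall c x, tt (c * ell a x) = tt (ell_adj c * x)}.
  by move=> c x cFq xFq; rewrite mulrC -tt_ell_adj // mulrC.
split=> [[_ ell_inj] x xFq | kerL].
  rewrite -ell_adjE //; exact: adjoint_inj_in tt0 ell_Fq ell_inj tt_nondeg tt_ell_adj_sym x xFq.
have ell_adj_inj : {in Fq &, injective ell_adj}.
  by apply: (additive_inj_in ell_adjD) => x xFq ?; apply: kerL; rewrite // -ell_adjE.
have ell_ker := adjoint_inj_in tt0 ell_adj_Fq ell_adj_inj tt_nondeg tt_ell_adj.
by split; [exact: ell_Fq | exact: (additive_inj_in ellD ell_ker)].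
Qed.

End EllAdjoint.

Lemma T_Ladj c x : T (c * L x) = T (Ladj a c * x).
Proof.
rewrite /Lmap /Ladj mulr_sumr mulr_suml !(trq_sum pchar_nat2); apply: eq_bigr => i _.
rewrite /qlin mulr_sumr mulr_suml !(trq_sum pchar_nat2); apply: eq_bigr => j _.
have le_k : (i + m * j <= m * n)%N by have := ltn_ord i; have := ltn_ord j; nia.
rewrite /frobinv -exprM -expnM -expnD.
rewrite -(trq_frobX (m * n - (i + m * j)) (expr_card2 hF _)) !exprMn -exprM -expnD.
by rewrite subnKC // (expr_card2 hF) mulrCA mulrA.
Qed.

Definition phi x := L x ^+ q + L x.

Definition theta (x : F) := x ^+ (q ^ n.-1) + x.

Lemma T_phi_adjoint c x : T (c * phi x) = T (Ladj a (theta c) * x).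
Proof.
rewrite /phi mulrDr (trqD pchar_nat2).
rewrite -(trq_frobX (m * n.-1) (expr_card2 hF (c * L x ^+ q))) expnM exprMn.
by rewrite -exprM -expnS prednK // expr_qn -(trqD pchar_nat2) -mulrDl T_Ladj.
Qed.

Lemma phi_eq0 x : (phi x == 0) = (L x \in Fq).
Proof. by rewrite /phi addr_eq0 oppr_pchar2. Qed.

Lemma theta_eq0 x : (theta x == 0) = (x \in Fq).
Proof.
rewrite /theta addr_eq0 oppr_pchar2 // FqE; apply/eqP/eqP => [xqn | /eqP xFq].
  by rewrite -xqn -exprM mulnC -qn_pred expr_qn.
exact: Fq_exprX.
Qed.

Lemma thetaD : {morph theta : x y / x + y}.
Proof. by move=> x y; rewrite /theta exprDn_pchar ?pnatX ?pchar_nat2 // addrACA. Qed.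

Lemma card_theta_ker : #|[set x | theta x == 0]| = q.
Proof. by rewrite -card_Fq; apply: eq_card => x; rewrite inE theta_eq0. Qed.

Lemma theta_image : [set theta x | x in F] = [set x | Tr x == 0].
Proof.
have img_sub : [set theta x | x in F] \subset [set x | Tr x == 0].
  apply/subsetP => _ /imsetP[x _ ->]; rewrite inE /theta (trqD (pchar_nat2X m)).
  by rewrite trq_frobX ?expr_qn // addrr_pchar2.
apply/eqP; rewrite eqEcard img_sub card_Tr_ker /=.
have := card_image_mul_ker thetaD; rewrite hF expnM qn_pred mulnC.
by rewrite card_theta_ker => /eqP; rewrite eqn_pmul2l ?expn_gt0 // => /eqP->.
Qed.

Lemma card_L_preim_Fq :
  #|[set x | L x \in Fq]| = (q * #|[set x | (Tr x == 0%R) && (Ladj a x == 0%R)]|)%N.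
Proof.
have phiD : {morph phi : x y / x + y}.
  by move=> x y; rewrite /phi LD exprDn_pchar ?pnatX ?pchar_nat2 // addrACA.
have mn_gt0 : (0 < m * n)%N by rewrite muln_gt0 m_gt0.
have -> : [set x | L x \in Fq] = [set x | phi x == 0].
  by apply/setP => x; rewrite !inE phi_eq0.
rewrite (card_ker_adjoint mn_gt0 hF phiD T_phi_adjoint).
have -> : [set x | Ladj a (theta x) == 0] =
    theta @^-1: [set x | (Tr x == 0) && (Ladj a x == 0)].
  apply/setP => x; rewrite !inE andb_idl // => _.
  have : theta x \in [set x | Tr x == 0] by rewrite -theta_image imset_f.
  by rewrite inE.
rewrite (card_preimset_additive thetaD); first by rewrite card_theta_ker mulnC.
by rewrite theta_image; apply/subsetP => x; rewrite !inE => /andP[].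
Qed.

Lemma Ladj0 : Ladj a 0 = 0.
Proof.
rewrite /Ladj big1 // => i _; rewrite big1 // => j _.
by rewrite mulr0 /frobinv expr0n expn_eq0.
Qed.

Lemma TrLadj_ker_triv_iff : (forall x, Tr x = 0 -> Ladj a x = 0 -> x = 0) <->
  #|[set x | (Tr x == 0) && (Ladj a x == 0)]| = 1%N.
Proof.
have K0 : 0 \in [set x | (Tr x == 0) && (Ladj a x == 0)].
  by rewrite inE Tr0 Ladj0 eqxx.
split=> [K_triv | /eqP/cards1P[x0 K_eq] x /eqP Trx /eqP Lx].
  apply/eqP/cards1P; exists 0; apply/setP => x; rewrite in_set1.
  by apply/idP/eqP => [/[!inE]/andP[/eqP Trx /eqP Lx] | ->] //; apply: K_triv.
have : x \in [set x | (Tr x == 0) && (Ladj a x == 0)] by rewrite inE Trx Lx.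
by move: K0; rewrite K_eq !in_set1 => /eqP<- /eqP.
Qed.

Lemma L_preim_Fq_iff : (forall x, L x \in Fq -> x \in Fq) <->
  {in Fq, forall x, L x \in Fq} /\ (forall x, Tr x = 0 -> Ladj a x = 0 -> x = 0).
Proof.
rewrite TrLadj_ker_triv_iff.
set P := [set x | L x \in Fq]; set K := [set x | _ && _].
have cardP : #|P| = (q * #|K|)%N := card_L_preim_Fq.
have Fq_P : {in Fq, forall x, L x \in Fq} <-> {subset Fq <= P}.
  by split=> FqL x xFq; move: (FqL x xFq); rewrite inE.
rewrite Fq_P; split=> [PFq | [FqP K1]]; last first.
  have P_eq : Fq =i P by apply/subset_cardP; [rewrite cardP K1 muln1 card_Fq | apply/subsetP].
  by move=> x LxFq; rewrite P_eq inE.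
have P_Fq : P \subset Fq by apply/subsetP => x; rewrite inE; apply: PFq.
have K1 : #|K| = 1%N.
  have K_pos : (0 < #|K|)%N by apply/card_gt0P; exists 0; rewrite inE Tr0 Ladj0 eqxx.
  have := subset_leq_card P_Fq; rewrite cardP card_Fq -{2}[q]muln1 leq_pmul2l ?expn_gt0 //.
  by move=> K_le1; apply/eqP; rewrite eqn_leq K_le1.
have P_eq : P =i Fq by apply/subset_cardP; rewrite // cardP K1 muln1 card_Fq.
by split=> // x; rewrite -P_eq.
Qed.

End Theorem1.

Theorem mainTheorem1 (F : finFieldType) (m n : nat)
    (hm : (1 <= m)%N) (hn : odd n) (hF : #|F| = (2 ^ (m * n))%N)
    (a : 'I_m -> 'I_n -> F) :
  bijective (fun x : F => trq (2 ^ m) n (x ^+ (2 ^ m + 1)) + Lmap a x)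
  <->
  [/\ (forall i : 'I_m, inFq m (qlin (2 ^ m) (a i) 1)),
      perm_on_set (inFq m) (ell a)
    & (forall x : F, trq (2 ^ m) n x = 0 -> Ladj a x = 0 -> x = 0)].
Proof.
have bij_iff : bijective (f a) <-> injective (f a).
  by split; [exact: bij_inj | exact: injF_bij].
rewrite -[bijective _]/(bijective (f a)) bij_iff (f_inj_iff hm hn hF).
rewrite (L_preim_Fq_iff hm hn hF) -(coefL_Fq_iff hm hn hF).
split=> [[[coefL_Fq ker_triv] Fq_ker] | [coefL_Fq ell_perm ker_triv]].
  by split=> //; apply/(ell_perm_iff hm hn hF coefL_Fq).
by split=> //; apply/(ell_perm_iff hm hn hF coefL_Fq).
Qed.
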